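(* For all primes $p$, all integers $m_1,m_2,k$ and all integers $r\ge1$, $$\binom{p^rm_1+p^rm_2-k-1}{p^rm_1}\equiv\binom{p^{r-1}m_1+p^{r-1}m_2-\lfloor k/p\rfloor-1}{p^{r-1}m_1}\pmod{p^r}.$$
   Context: For all integers $n, k$, the binomial coefficient is defined by $\binom{n}{k} = \lim_{z \to 0} \frac{\Gamma(z+n+1)}{\Gamma(z+k+1)\Gamma(z+n-k+1)}$; this is a finite integer for all $n,k\in\mathbb{Z}$, agrees with the usual one for $n\ge0$, and satisfies $\binom{n}{k}=\binom{n}{n-k}$. $\lfloor x\rfloor$ denotes the floor function. *)

From HB Require Import structures.
From mathcomp Require Import all_boot all_order all_algebra.
Set Implicit Arguments. Unset Strict Implicit. Unset Printing Implicit Defensive.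
Import Order.TTheory GRing.Theory Num.Theory.
Local Open Scope ring_scope.

(* Binomial coefficient for all integers n, k, defined (as in the paper) as
   lim_{z->0} Gamma(z+n+1) / (Gamma(z+k+1) Gamma(z+n-k+1)).
   Evaluating this limit gives the explicit closed form below:
   - n >= 0 : the usual binomial (0 unless 0 <= k <= n);
   - n < 0, k >= 0 : (-1)^k * C(k-n-1, k);
   - n < 0, k <= n : (-1)^(n-k) * C(-k-1, n-k);
   - n < k < 0 : 0. *)
Definition binomZ (n k : int) : int :=
  if 0 <= n then
    (if 0 <= k then ('C((absz (n)%R), (absz (k)%R)))%:Z else 0)
  else if 0 <= k then
    (-1) ^+ (absz (k)%R) * ('C((absz (k - n - 1)%R), (absz (k)%R)))%:Z
  else if k <= n then
    (-1) ^+ (absz (n - k)%R) * ('C((absz (- k - 1)%R), (absz (n - k)%R)))%:Z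
  else 0.

From HB Require Import structures.
From mathcomp Require Import all_boot all_order all_algebra.
From mathcomp Require Import ring zify.
Import Order.TTheory GRing.Theory Num.Theory.

(* With K := p^(r-1) m1 the left binomial is C(pK + L, pK).  For K, L >= 0,
   C(pK + L, L) is the product of (pK + j) / j over 1 <= j <= L.  The factors
   with p | j multiply to C(K + L/p, L/p); in the others pK + j = j modulo
   p^r, and the product of those j is a unit modulo p^r, so they cancel.
   Negative arguments reduce by reflection to C(pA - 1, b), the product of
   (pA - j) / j, where the same splitting costs the sign (-1)^(b - b/p).  The
   shift by -k-1 then becomes the floor division by p on the right. *)

Lemma big_nat_cond_recr (R : Type) (idx : R) (op : Monoid.law idx)
    (P : pred nat) (F : nat -> R) n :
  \big[op/idx]_(0 <= j < n.+1 | P j) F j =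
  op (\big[op/idx]_(0 <= j < n | P j) F j) (if P n then F n else idx).
Proof. by rewrite big_mkcond big_nat_recr //= -big_mkcond. Qed.

Lemma coprime_prod_nondvd p b : prime p ->
  coprime (\prod_(0 <= j < b.+1 | ~~ (p %| j)%N) j) p.
Proof.
move=> p_prime; apply: (big_ind (coprime^~ p)) => [|x y|j pj].
- exact: coprime1n.
- by rewrite coprimeMl => -> ->.
- by rewrite coprime_sym prime_coprime.
Qed.

Local Open Scope ring_scope.

Lemma eqz_modM {d x y u v : int} :
  (x = y %[mod d])%Z -> (u = v %[mod d])%Z -> (x * u = y * v %[mod d])%Z.
Proof. by move=> xy uv; rewrite -modzMm xy uv modzMm. Qed.

Lemma eqz_mod_mulr_coprime {d q : nat} (x y : int) : coprime q d ->
  (x * q%:Z == y * q%:Z %[mod d%:Z])%Z = (x == y %[mod d%:Z])%Z.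
Proof.
by move=> qd; rewrite !eqz_mod_dvd -mulrBl Gauss_dvdzl // coprimezE coprime_sym.
Qed.

Lemma prod_nondvd_modz p (d s : int) (F G : nat -> nat) b : (0 < p)%N ->
  (forall j, (j <= b)%N -> ~~ (p %| j)%N ->
     ((F j)%:Z = s * (G j)%:Z %[mod d])%Z) ->
  ((\prod_(0 <= j < b.+1 | ~~ (p %| j)) F j)%N%:Z
   = s ^+ (b - b %/ p) * (\prod_(0 <= j < b.+1 | ~~ (p %| j)) G j)%N%:Z
   %[mod d])%Z.
Proof.
move=> p_gt0; elim: b => [|b IH] FG.
  by rewrite !big_nat_cond_recr !big_geq // dvdn0 mul1r.
rewrite !(@big_nat_cond_recr _ _ _ _ _ b.+1) divnS //.
have IHb := IH (fun j jb => FG j (leqW jb)).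
case: (boolP (p %| b.+1)%N) => /= pb; first by rewrite !muln1 add1n subSS.
rewrite add0n subSn ?leq_div // !PoszM (eqz_modM IHb (FG _ _ pb)) //.
by rewrite exprS; congr (_ %% _)%Z; ring.
Qed.

Section NondvdProduct.

Variables (p : nat) (u v g h : nat -> nat).
Hypothesis p_prime : prime p.
Hypothesis u0 : u 0 = v 0.
Hypothesis uS : forall b, (b.+1 * u b.+1 = g b.+1 * u b)%N.
Hypothesis vS : forall t, (t.+1 * v t.+1 = h t.+1 * v t)%N.
Hypothesis g_pmul : forall t, g (p * t)%N = (p * h t)%N.

(* That is, u b = prod_(j <= b) g j / j and v t = prod_(i <= t) h i / i. *)

Let p_gt0 := prime_gt0 p_prime.

Lemma mul_prod_nondvd b :
  (u b * \prod_(0 <= j < b.+1 | ~~ (p %| j)) j =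
   v (b %/ p) * \prod_(0 <= j < b.+1 | ~~ (p %| j)) g j)%N.
Proof.
elim: b => [|b IH].
  by rewrite !big_nat_cond_recr !big_geq // dvdn0 div0n u0.
rewrite !(@big_nat_cond_recr _ _ _ _ _ b.+1) divnS //.
case: (boolP (p %| b.+1)%N) => /= pb.
- set t := (b %/ p)%N; rewrite !muln1 add1n.
  have bE : b.+1 = (p * t.+1)%N by rewrite -{1}(divnK pb) divnS // pb mulnC.
  have uS' : (t.+1 * u b.+1 = h t.+1 * u b)%N.
    by apply/eqP; rewrite -(eqn_pmul2l p_gt0) !mulnA -bE uS bE g_pmul -mulnA.
  apply/eqP; rewrite -(eqn_pmul2l (ltn0Sn t)); apply/eqP.
  by rewrite mulnA uS' -mulnA IH [RHS]mulnA vS mulnA.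
- apply/eqP; rewrite -(eqn_pmul2l (ltn0Sn b)); apply/eqP.
  by rewrite add0n mulnA uS -mulnA (mulnA (u b)) IH; ring.
Qed.

Lemma nondvd_recursion_modz r (s : int) b :
  (forall j, (j <= b)%N -> ~~ (p %| j)%N ->
     ((g j)%:Z = s * j%:Z %[mod (p ^ r)%N%:Z])%Z) ->
  ((u b)%:Z = s ^+ (b - b %/ p) * (v (b %/ p))%:Z %[mod (p ^ r)%N%:Z])%Z.
Proof.
move=> g_modz; apply/eqP.
have coprimeP := coprimeXr r (coprime_prod_nondvd p b p_prime).
rewrite -(eqz_mod_mulr_coprime _ _ coprimeP) -PoszM mul_prod_nondvd PoszM.
rewrite -mulrA mulrCA; apply/eqP/eqz_modM => //.
exact: prod_nondvd_modz.
Qed.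

End NondvdProduct.

Lemma bin_pmulD_modz p r K L : prime p -> (p ^ r %| p * K)%N ->
  ('C(p * K + L, L)%:Z = 'C(K + L %/ p, L %/ p)%:Z %[mod (p ^ r)%N%:Z])%Z.
Proof.
move=> p_prime dvd_pK.
rewrite -[X in (_ = X %[mod _])%Z]mul1r -(expr1n _ (L - L %/ p)).
apply: (@nondvd_recursion_modz p (fun b => 'C(p * K + b, b))
          (fun t => 'C(K + t, t)) (fun j => p * K + j)%N
          (fun t => K + t)%N p_prime) => [|b|t|t|j _ _].
- by rewrite !bin0.
- by rewrite -mul_bin_diag addnS.
- by rewrite -mul_bin_diag addnS.
- by rewrite mulnDr.
- by rewrite mul1r -(divnK dvd_pK) PoszD PoszM modzMDl.
Qed.

Lemma bin_pmulB1_modz {p r A b} :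
  prime p -> (p ^ r %| p * A)%N -> (b < p * A)%N ->
  ('C(p * A - 1, b)%:Z = (-1) ^+ (b - b %/ p) * 'C(A - 1, b %/ p)%:Z
   %[mod (p ^ r)%N%:Z])%Z.
Proof.
move=> p_prime dvd_pA b_lt.
apply: (@nondvd_recursion_modz p (fun c => 'C(p * A - 1, c))
          (fun t => 'C(A - 1, t)) (fun j => p * A - j)%N
          (fun t => A - t)%N p_prime) => [|c|t|t|j j_le _].
- by rewrite !bin0.
- by rewrite mul_bin_left -subnDA add1n.
- by rewrite mul_bin_left -subnDA add1n.
- by rewrite mulnBr.
- rewrite -subzn ?(ltnW (leq_ltn_trans j_le b_lt)) // mulN1r.
  by rewrite -(divnK dvd_pA) PoszM modzMDl.
Qed.

Lemma signr_pmul_modz p r a : prime p -> (p ^ r %| p * a)%N ->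
  (((-1) ^+ (p * a) : int) = (-1) ^+ a %[mod (p ^ r)%N%:Z])%Z.
Proof.
move=> p_prime dvd_pa; case: (even_prime p_prime) => [p2|p_odd]; last first.
  by rewrite -signr_odd oddM p_odd /= signr_odd.
subst p; rewrite -signr_odd oddM /= expr0.
case: r dvd_pa => [|[|r]] dvd_2a; first by rewrite !modz1.
  by rewrite -signr_odd; case: (odd a).
have two_dvd_a : (2 %| a)%N.
  rewrite expnS dvdn_pmul2l // in dvd_2a.
  by apply: dvdn_trans dvd_2a; rewrite expnS dvdn_mulr.
by move: two_dvd_a; rewrite dvdn2 -signr_odd => /negbTE ->.
Qed.

Lemma bin_addC n m : 'C(n + m, n) = 'C(n + m, m).
Proof. by rewrite -{3}(addKn n m) bin_sub // leq_addr. Qed.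

Lemma pmulz_Negz p a : (0 < p)%N -> p%:Z * Negz a = Negz (p * a.+1).-1.
Proof.
by move=> p_gt0; rewrite !NegzE mulrN -PoszM prednK // muln_gt0 p_gt0.
Qed.

Definition binom2 (K L : int) : int :=
  if 0 <= K then
    if 0 <= L then 'C(`|K| + `|L|, `|K|)%:Z
    else (-1) ^+ `|K| * 'C(`|L|.-1, `|K|)%:Z
  else if 0 <= L then (-1) ^+ `|L| * 'C(`|K|.-1, `|L|)%:Z else 0.

Lemma binomZ_addl K L : binomZ (K + L) K = binom2 K L.
Proof.
rewrite /binomZ /binom2; case: K => a; case: L => b.
- by rewrite !le0z_nat.
- rewrite le0z_nat /=; case: ifP => [le_ab|].
    by rewrite !bin_small ?mulr0 //; lia.
  by have -> : a%:Z - (a%:Z + Negz b) - 1 = b%:Z by lia.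
- rewrite le0z_nat /=; case: ifP => [le_ab|_].
    by rewrite bin_small ?mulr0 //; lia.
  have -> : Negz a <= Negz a + b by lia.
  have -> : Negz a + b - Negz a = b%:Z by lia.
  by rewrite subn1.
- have -> : (0 <= Negz a + Negz b) = false by lia.
  by have -> : (Negz a <= Negz a + Negz b) = false by lia.
Qed.

Lemma binom2_pmul_modz p r K L : prime p -> (p ^ r %| p * `|K|)%N ->
  (binom2 (p%:Z * K) L = binom2 K (L %/ p%:Z)%Z %[mod (p ^ r)%N%:Z])%Z.
Proof.
move=> p_prime; have p_gt0 := prime_gt0 p_prime.
case: K => a dvd_pa; case: L => b.
- rewrite -PoszM divz_nat /binom2 /= !bin_addC; exact: bin_pmulD_modz.
- rewrite -PoszM divNz_nat // -NegzE /binom2 /=.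
  apply: eqz_modM; first exact: signr_pmul_modz.
  have [b_lt|b_ge] := ltnP b (p * a).
    by rewrite !bin_small // ltn_divLR // mulnC.
  rewrite -(subnKC b_ge) bin_addC mulnC divnMDl // bin_addC mulnC.
  exact: bin_pmulD_modz.
- rewrite pmulz_Negz // divz_nat /binom2 /=.
  have [b_lt|b_ge] := ltnP b (p * a.+1); last first.
    rewrite !bin_small ?mulr0 // ?leq_divRL // 1?mulnC //.
    by rewrite prednK ?muln_gt0 ?p_gt0 // mulnC.
  have := bin_pmulB1_modz p_prime dvd_pa b_lt; rewrite /= subn1 => /= Cmod.
  set e := (b - b %/ p)%N.
  have bE : b = (e + b %/ p)%N by rewrite subnK ?leq_div.
  rewrite -modzMmr Cmod modzMmr mulrA -exprD {1}bE addnAC addnn.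
  by rewrite exprD -muln2 exprM sqrr_sign mul1r subn1.
- by rewrite pmulz_Negz // divNz_nat // -NegzE.
Qed.

Lemma divzNB1 (k : int) (d : nat) : (0 < d)%N ->
  ((- k - 1) %/ d%:Z)%Z = - (k %/ d%:Z)%Z - 1.
Proof.
move=> d_gt0; case: k => n.
- have -> : - n%:Z - 1 = Negz n by rewrite NegzE; lia.
  by rewrite divNz_nat // divz_nat; lia.
- have -> : - Negz n - 1 = n%:Z by rewrite NegzE; lia.
  by rewrite divz_nat divNz_nat //; lia.
Qed.

Theorem lemma5p5 (p : nat) (m1 m2 k : int) (r : nat) :
  prime p -> (1 <= r)%N ->
  (binomZ ((p ^ r)%N%:Z * m1 + (p ^ r)%N%:Z * m2 - k - 1) ((p ^ r)%N%:Z * m1)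
   = binomZ ((p ^ r.-1)%N%:Z * m1 + (p ^ r.-1)%N%:Z * m2 - (k %/ p%:Z)%Z - 1)
            ((p ^ r.-1)%N%:Z * m1)
   %[mod (p ^ r)%N%:Z])%Z.
Proof.
move=> p_prime r_gt0; have p_gt0 := prime_gt0 p_prime.
have pr : (p ^ r)%N%:Z = p%:Z * (p ^ r.-1)%N%:Z by rewrite -PoszM -expnS prednK.
set K := (p ^ r.-1)%N%:Z * m1; set L := (p ^ r)%N%:Z * m2 - k - 1.
have dvd_pK : (p ^ r %| p * `|K|)%N.
  by rewrite abszM mulnA -expnS prednK // dvdn_mulr.
have pKE : (p ^ r)%N%:Z * m1 = p%:Z * K by rewrite pr mulrA.
have divLE : (L %/ p%:Z)%Z = (p ^ r.-1)%N%:Z * m2 - (k %/ p%:Z)%Z - 1.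
  rewrite /L pr -mulrA -addrA mulrC divzMDl ?divzNB1 -?lt0n //.
  by rewrite addrA.
have argE : (p ^ r)%N%:Z * m1 + (p ^ r)%N%:Z * m2 - k - 1 = p%:Z * K + L.
  by rewrite /L pKE !addrA.
rewrite argE pKE binomZ_addl binom2_pmul_modz // -binomZ_addl divLE.
by rewrite /K !addrA.
Qed.
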